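(* For each $b \geq 0$, define the optimisation objective \[ l_b(\rho) \defeq \frac{\frac{1}{e}(\rho^2 + b\rho + 1)}{\rho\, W_0\!\left(\frac{1}{e}(\rho^2 + b\rho + 1)\right)} \] over $\rho > \sqrt{2}$. The unique minimiser of $l_0$ is \[ \rho_0 \defeq \sqrt{1 + e^{W_0(2/e^2)+2}}. \] More generally, $l_b$ is uniquely minimised by the solution $\rho_b$ of the ordinary differential equation \[ \frac{d}{db}\rho_b = \frac{\rho_b^2}{(\rho_b^2+1)\log(\rho_b^2-1)} = \frac{\rho_b}{2\rho_b+b}\left(1 - \frac{2}{\rho_b^2 + 1}\right) > 0 \] with initial value $\rho_b\big|_{b=0} = \sqrt{1 + e^{W_0(2/e^2)+2}}$. Furthermore, the minimal value of $l_b$ satisfies \[ l_b(\rho_b) = \frac{\rho_b^2 - 1}{e \rho_b} < \frac{\rho_b}{e}. \]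
   Context: $W_0$ denotes the principal branch of the Lambert W function, i.e. for $z>-1/e$, $W_0(z)$ is the unique solution $w\in(-1,\infty)$ of $we^w=z$. *)

From Stdlib Require Import Reals Lra ClassicalEpsilon.
From Coquelicot Require Import Coquelicot.
Open Scope R_scope.

(* Principal branch of Lambert W: for z > -1/e, W0 z is the unique
   w in (-1, +oo) with w * exp w = z.  Defined by (classical) choice;
   its value is irrelevant outside the domain z > -1/e. *)
Definition W0 (z : R) : R :=
  epsilon (inhabits 0) (fun w => -1 < w /\ w * exp w = z).

Definition lobj (b rho : R) : R :=
  let q := (rho ^ 2 + b * rho + 1) / exp 1 in
  q / (rho * W0 q).

Definition rho0 : R := sqrt (1 + exp (W0 (2 / (exp 1) ^ 2) + 2)).

Definition unique_minimiser (b r : R) : Prop :=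
  sqrt 2 < r /\ forall s, sqrt 2 < s -> s <> r -> lobj b r < lobj b s.

From Stdlib Require Import Reals Lra ClassicalEpsilon.
From Coquelicot Require Import Coquelicot.
Open Scope R_scope.

(* Since q = W0 q * e^(W0 q), the objective is l_b(s) = e^(W0 q_s) / s with
   q_s = (s^2 + b s + 1) / e.  Put u = ln (r^2 - 1) - 1, so that e^u = (r^2 - 1) / e.
   The point r is critical for l_b exactly when q_r = u e^u, i.e. when
   b = crit r.  On [sqrt 2, oo) the function crit increases strictly from
   -2 sqrt 2 to oo, so rho_b is its inverse and the differential equation is
   the inverse function rule.  The value at r = rho_b is e^u / r = (r^2 - 1) / (e r).
   For s = t r, put v = ln (l_b(rho_b) s) = u + ln t; then ln t <= t - 1 gives
   e q_s - e v e^v >= (t - 1)^2 > 0 when t <> 1, hence W0 q_s > v, which says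
   exactly l_b(s) > l_b(rho_b). *)

Lemma xexp_lt x y : 0 <= x -> x < y -> x * exp x < y * exp y.
Proof.
  intros Hx Hxy. pose proof (exp_increasing _ _ Hxy). pose proof (exp_pos x). nra.
Qed.

Lemma W0_xexp w : 0 < w -> W0 (w * exp w) = w.
Proof.
  intros Hw. unfold W0.
  assert (Hex : exists w', -1 < w' /\ w' * exp w' = w * exp w)
    by (exists w; split; [lra | reflexivity]).
  destruct (epsilon_spec (inhabits 0) _ Hex) as [_ Hw'].
  set (w' := epsilon _ _) in *.
  pose proof (exp_pos w). pose proof (exp_pos w').
  assert (0 < w') by nra.
  destruct (Rtotal_order w' w) as [Hlt | [Heq | Hgt]]; [| exact Heq |].
  - pose proof (xexp_lt w' w ltac:(lra) Hlt). lra.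
  - pose proof (xexp_lt w w' ltac:(lra) Hgt). lra.
Qed.

Lemma W0_spec z : 0 < z -> 0 < W0 z /\ W0 z * exp (W0 z) = z.
Proof.
  intros Hz.
  assert (Hcont : continuity (fun x => x * exp x)).
  { apply continuity_mult; apply derivable_continuous;
      [apply derivable_id | apply derivable_exp]. }
  assert (Hz_between : Rmin (0 * exp 0) (z * exp z) <= z <= Rmax (0 * exp 0) (z * exp z)).
  { pose proof (exp_ineq1_le z). rewrite Rmin_left, Rmax_right; nra. }
  destruct (IVT_gen _ 0 z z Hcont Hz_between) as [w [_ Hw]].
  assert (0 < w) by (pose proof (exp_pos w); nra).
  rewrite <- Hw, W0_xexp; auto.
Qed.

Lemma W0_gt z v : 0 < z -> v * exp v < z -> v < W0 z.
Proof.
  intros Hz Hv. destruct (W0_spec z Hz) as [Hpos Hfix].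
  destruct (Rlt_or_le v (W0 z)) as [Hlt | Hle]; [exact Hlt |].
  destruct (Rle_lt_or_eq_dec _ _ Hle) as [Hlt | Heq].
  - pose proof (xexp_lt (W0 z) v ltac:(lra) Hlt). lra.
  - rewrite <- Heq in Hv. lra.
Qed.

Lemma ln_le_sub_1 t : 0 < t -> ln t <= t - 1.
Proof.
  intros Ht. pose proof (exp_ineq1_le (ln t)) as Hexp. rewrite exp_ln in Hexp; lra.
Qed.

Lemma one_lt_sqrt2 : 1 < sqrt 2.
Proof. rewrite <- sqrt_1. apply sqrt_lt_1; lra. Qed.

Lemma ln_sq_sub_1_pos r : sqrt 2 < r -> 0 < ln (r ^ 2 - 1).
Proof.
  intros Hr. pose proof one_lt_sqrt2. pose proof (pow2_sqrt 2 ltac:(lra)).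
  rewrite <- ln_1. apply ln_increasing; nra.
Qed.

Lemma lobj_exp_W0 b s : 0 < s -> 0 < s ^ 2 + b * s + 1 ->
  lobj b s = exp (W0 ((s ^ 2 + b * s + 1) / exp 1)) / s.
Proof.
  intros Hs Hq. unfold lobj; cbv zeta.
  set (q := (s ^ 2 + b * s + 1) / exp 1).
  assert (Hq_pos : 0 < q) by (apply Rdiv_lt_0_compat; [lra | apply exp_pos]).
  destruct (W0_spec q Hq_pos) as [Hw Hfix].
  rewrite <- Hfix at 1. field. lra.
Qed.

(* [crit r] is the unique [b] for which [r] is a critical point of [lobj b]. *)
Definition crit (x : R) : R := (x ^ 2 - 1) * ln (x ^ 2 - 1) / x - 2 * x.

Definition dcrit (x : R) : R := (x ^ 2 + 1) * ln (x ^ 2 - 1) / x ^ 2.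

Lemma crit_mul x : x <> 0 -> crit x * x = (x ^ 2 - 1) * ln (x ^ 2 - 1) - 2 * x ^ 2.
Proof. intros Hx. unfold crit. field. exact Hx. Qed.

Lemma crit_derive x : 1 < x -> is_derive crit x (dcrit x).
Proof.
  intros Hx. unfold crit, dcrit. auto_derive.
  - repeat split; nra.
  - replace (x * (x * 1) + - (1)) with (x ^ 2 - 1) by ring.
    field. split; [lra | nra].
Qed.

Lemma crit_continuous x : 1 < x -> continuity_pt crit x.
Proof.
  intros Hx. apply derivable_continuous_pt. exists (dcrit x).
  apply is_derive_Reals, crit_derive, Hx.
Qed.

Lemma dcrit_pos x : sqrt 2 < x -> 0 < dcrit x.
Proof.
  intros Hx. pose proof one_lt_sqrt2. pose proof (ln_sq_sub_1_pos x Hx).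
  unfold dcrit. apply Rdiv_lt_0_compat; nra.
Qed.

Lemma crit_lt x y : sqrt 2 <= x -> x < y -> crit x < crit y.
Proof.
  intros Hx Hxy. pose proof one_lt_sqrt2.
  destruct (MVT_cor2 crit dcrit x y Hxy) as [c [Hmvt Hc]].
  - intros c Hc. apply is_derive_Reals, crit_derive. lra.
  - pose proof (dcrit_pos c ltac:(lra)). nra.
Qed.

Lemma crit_le_inv x y : sqrt 2 <= x -> sqrt 2 <= y -> crit x <= crit y -> x <= y.
Proof.
  intros Hx Hy Hcrit. destruct (Rle_or_lt x y) as [Hle | Hlt]; [exact Hle |].
  pose proof (crit_lt y x Hy Hlt). lra.
Qed.

Lemma crit_sqrt2 : crit (sqrt 2) = - 2 * sqrt 2.
Proof.
  unfold crit. rewrite pow2_sqrt by lra.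
  replace (2 - 1) with 1 by lra. rewrite ln_1.
  pose proof one_lt_sqrt2. field. lra.
Qed.

Lemma crit_unbounded b : exists M, sqrt 2 < M /\ b < crit M.
Proof.
  set (M := exp 3 + Rabs b + 3).
  pose proof (exp_pos 3). pose proof (Rle_abs b). pose proof (Rabs_pos b).
  assert (HM : 3 <= M) by (unfold M; lra).
  assert (Hln : 3 <= ln (M ^ 2 - 1)).
  { rewrite <- (ln_exp 3). apply ln_le; [lra | unfold M in *; nra]. }
  exists M. split.
  - pose proof (sqrt_less_alt 2 ltac:(lra)). lra.
  - apply Rmult_lt_reg_r with M; [lra |].
    rewrite crit_mul by lra.
    assert (Hb : b <= M - 3) by (unfold M; lra).
    assert (3 * (M ^ 2 - 1) <= (M ^ 2 - 1) * ln (M ^ 2 - 1)).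
    { rewrite (Rmult_comm 3). apply Rmult_le_compat_l; nra. }
    nra.
Qed.

Lemma crit_surj b : - 2 * sqrt 2 <= b -> exists r, sqrt 2 <= r /\ crit r = b.
Proof.
  intros Hb. pose proof one_lt_sqrt2.
  destruct (Rle_lt_or_eq_dec _ _ Hb) as [Hlt | <-];
    [| exists (sqrt 2); split; [lra | apply crit_sqrt2]].
  destruct (crit_unbounded b) as [M [HM HbM]].
  destruct (Ranalysis5.IVT_interv (fun x => crit x - b) (sqrt 2) M) as [r [Hr Hcrit]].
  - intros a Ha. apply continuity_pt_minus;
      [apply crit_continuous; lra | apply continuity_pt_const; intros ? ?; reflexivity].
  - exact HM.
  - rewrite crit_sqrt2. lra.
  - lra.
  - exists r. split; lra.
Qed.

Definition rho_opt (b : R) : R :=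
  epsilon (inhabits 0) (fun r => sqrt 2 <= r /\ crit r = b).

Lemma rho_opt_spec b : - 2 * sqrt 2 <= b -> sqrt 2 <= rho_opt b /\ crit (rho_opt b) = b.
Proof. intros Hb. unfold rho_opt. apply epsilon_spec, crit_surj, Hb. Qed.

Lemma rho_opt_crit r : sqrt 2 <= r -> rho_opt (crit r) = r.
Proof.
  intros Hr.
  assert (Hdom : - 2 * sqrt 2 <= crit r).
  { rewrite <- crit_sqrt2. destruct (Rle_lt_or_eq_dec _ _ Hr) as [Hlt | <-];
      [apply Rlt_le, crit_lt; lra | lra]. }
  destruct (rho_opt_spec _ Hdom) as [Hge Hcrit].
  apply Rle_antisym; apply crit_le_inv; lra.
Qed.

Lemma rho_opt_gt b : - 2 * sqrt 2 < b -> sqrt 2 < rho_opt b.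
Proof.
  intros Hb. destruct (rho_opt_spec b ltac:(lra)) as [Hge Hcrit].
  destruct (Rle_lt_or_eq_dec _ _ Hge) as [Hlt | Heq]; [exact Hlt |].
  rewrite <- Heq, crit_sqrt2 in Hcrit. lra.
Qed.

Lemma rho_opt_le x y : - 2 * sqrt 2 <= x -> x <= y -> rho_opt x <= rho_opt y.
Proof.
  intros Hx Hxy.
  destruct (rho_opt_spec x Hx) as [Hx1 Hx2].
  destruct (rho_opt_spec y ltac:(lra)) as [Hy1 Hy2].
  apply crit_le_inv; lra.
Qed.

Lemma rho_opt_continuous b : - 2 * sqrt 2 < b -> continuity_pt rho_opt b.
Proof.
  intros Hb. pose proof one_lt_sqrt2.
  set (ub := rho_opt b + 1).
  destruct (rho_opt_spec b ltac:(lra)) as [Hrho Hcrit].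
  assert (Hub : b < crit ub) by (rewrite <- Hcrit at 1; apply crit_lt; unfold ub; lra).
  apply (Ranalysis5.continuity_pt_recip_interv crit rho_opt (sqrt 2) ub);
    rewrite ?crit_sqrt2.
  - unfold ub. lra.
  - intros x y Hx Hxy _. apply crit_lt; lra.
  - intros x Hx _. apply rho_opt_spec, Hx.
  - intros x Hx Hxub. split; [apply rho_opt_spec, Hx |].
    rewrite <- (rho_opt_crit ub) by (unfold ub; lra). apply rho_opt_le; lra.
  - intros a Ha. apply crit_continuous. lra.
  - lra.
Qed.

Lemma rho_opt_derive b : - 2 * sqrt 2 < b ->
  is_derive rho_opt b
    (rho_opt b ^ 2 / ((rho_opt b ^ 2 + 1) * ln (rho_opt b ^ 2 - 1))).
Proof.
  intros Hb. pose proof one_lt_sqrt2.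
  pose proof (rho_opt_gt b Hb) as Hrho. set (r := rho_opt b) in *.
  pose proof (ln_sq_sub_1_pos r Hrho).
  assert (Hinv : 1 / dcrit r = r ^ 2 / ((r ^ 2 + 1) * ln (r ^ 2 - 1)))
    by (unfold dcrit; field; split; nra).
  apply is_derive_Reals. rewrite <- Hinv.
  assert (Hlb : sqrt 2 <= rho_opt (- 2 * sqrt 2)) by (apply rho_opt_spec; lra).
  assert (Hderiv : forall a, rho_opt (- 2 * sqrt 2) <= a <= rho_opt (b + 1) ->
                     derivable_pt crit a).
  { intros a Ha. exists (dcrit a). apply is_derive_Reals, crit_derive. lra. }
  assert (Hmono : rho_opt (- 2 * sqrt 2) <= r <= rho_opt (b + 1))
    by (split; apply rho_opt_le; lra).
  pose proof (Ranalysis5.derivable_pt_lim_recip_interv crit rho_opt (- 2 * sqrt 2) (b + 1) b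
    Hderiv (rho_opt_continuous b Hb) ltac:(lra) ltac:(lra) Hmono) as Hrecip.
  fold r in Hrecip.
  rewrite (derive_pt_eq_0 crit r (dcrit r) (Hderiv r Hmono)) in Hrecip.
  - apply Hrecip; [| pose proof (dcrit_pos r Hrho); lra].
    intros x Hx. unfold comp, id. apply rho_opt_spec. lra.
  - apply is_derive_Reals, crit_derive. lra.
Qed.

Lemma ode_rhs_eq b r : sqrt 2 < r -> crit r = b ->
  r ^ 2 / ((r ^ 2 + 1) * ln (r ^ 2 - 1)) = r / (2 * r + b) * (1 - 2 / (r ^ 2 + 1)).
Proof.
  intros Hr <-. pose proof one_lt_sqrt2. pose proof (ln_sq_sub_1_pos r Hr).
  assert (Hsum : 2 * r + crit r = (r ^ 2 - 1) * ln (r ^ 2 - 1) / r).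
  { apply Rmult_eq_reg_r with r; [| lra].
    rewrite Rmult_plus_distr_r, crit_mul by lra. field. lra. }
  rewrite Hsum. field. repeat split; nra.
Qed.

Lemma ode_rhs_pos r : sqrt 2 < r -> 0 < r ^ 2 / ((r ^ 2 + 1) * ln (r ^ 2 - 1)).
Proof.
  intros Hr. pose proof one_lt_sqrt2. pose proof (ln_sq_sub_1_pos r Hr).
  apply Rdiv_lt_0_compat; nra.
Qed.

(* For [s = t r] the left side is [e v e^v] with [v = ln (lobj (crit r) r * s)]. *)
Lemma crit_tangent_bound r t : 1 < r -> 0 < t -> t <> 1 ->
  (ln (r ^ 2 - 1) - 1 + ln t) * ((r ^ 2 - 1) * t) < (t * r) ^ 2 + crit r * (t * r) + 1.
Proof.
  intros Hr Ht Ht1.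
  assert (Hid : (t * r) ^ 2 + crit r * (t * r) + 1
                = (ln (r ^ 2 - 1) - 1 + (t - 1)) * ((r ^ 2 - 1) * t) + (t - 1) ^ 2).
  { replace (crit r * (t * r)) with (t * (crit r * r)) by ring.
    rewrite crit_mul by lra. ring. }
  assert (Hgap : 0 < (t - 1) ^ 2)
    by (rewrite <- Rsqr_pow2; apply Rsqr_pos_lt; lra).
  assert (HK : 0 < (r ^ 2 - 1) * t) by (apply Rmult_lt_0_compat; nra).
  assert (ln t * ((r ^ 2 - 1) * t) <= (t - 1) * ((r ^ 2 - 1) * t))
    by (apply Rmult_le_compat_r; [lra | apply ln_le_sub_1, Ht]).
  rewrite Hid. lra.
Qed.

Lemma lobj_at_crit b r : 1 < r -> 0 <= b -> crit r = b ->
  lobj b r = (r ^ 2 - 1) / (exp 1 * r).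
Proof.
  intros Hr Hb <-. pose proof (exp_pos 1).
  set (u := ln (r ^ 2 - 1) - 1).
  assert (Hstat : r ^ 2 + crit r * r + 1 = (r ^ 2 - 1) * u)
    by (rewrite crit_mul by lra; unfold u; ring).
  assert (Hr2 : 0 < r ^ 2 - 1) by nra.
  assert (Hu : 0 < u).
  { assert (0 < (r ^ 2 - 1) * u) by (rewrite <- Hstat; nra). nra. }
  assert (Hexp : exp u = (r ^ 2 - 1) / exp 1).
  { unfold u, Rminus at 1. rewrite exp_plus, exp_Ropp, exp_ln by nra. reflexivity. }
  rewrite lobj_exp_W0 by nra.
  replace ((r ^ 2 + crit r * r + 1) / exp 1) with (u * exp u)
    by (rewrite Hexp, Hstat; field; lra).
  rewrite W0_xexp, Hexp by exact Hu. field. lra.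
Qed.

Lemma lobj_gt_at_crit b r s : 1 < r -> 0 <= b -> crit r = b -> 0 < s -> s <> r ->
  (r ^ 2 - 1) / (exp 1 * r) < lobj b s.
Proof.
  intros Hr Hb <- Hs Hsr. pose proof (exp_pos 1).
  set (t := s / r).
  assert (Ht : 0 < t) by (apply Rdiv_lt_0_compat; lra).
  assert (Hst : s = t * r) by (unfold t; field; lra).
  assert (Ht1 : t <> 1) by (intros E; apply Hsr; rewrite Hst, E; ring).
  rewrite lobj_exp_W0 by nra.
  set (q := (s ^ 2 + crit r * s + 1) / exp 1).
  set (v := ln (r ^ 2 - 1) - 1 + ln t).
  assert (Hexp : exp v = (r ^ 2 - 1) * t / exp 1).
  { unfold v, Rminus at 1. rewrite !exp_plus, exp_Ropp, !exp_ln by nra.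
    field. lra. }
  assert (Hv : v < W0 q).
  { apply W0_gt; [unfold q; apply Rdiv_lt_0_compat; nra |].
    rewrite Hexp. unfold q, Rdiv. rewrite <- Rmult_assoc, Hst.
    apply Rmult_lt_compat_r; [apply Rinv_0_lt_compat; lra |].
    apply crit_tangent_bound; assumption. }
  replace ((r ^ 2 - 1) / (exp 1 * r)) with (exp v / s)
    by (rewrite Hexp, Hst; field; split; lra).
  apply Rmult_lt_compat_r; [apply Rinv_0_lt_compat; lra |].
  apply exp_increasing, Hv.
Qed.

Lemma unique_minimiser_of_crit b r : sqrt 2 < r -> 0 <= b -> crit r = b ->
  unique_minimiser b r.
Proof.
  intros Hr Hb Hcrit. pose proof one_lt_sqrt2.
  split; [exact Hr |]. intros s Hs Hsr.
  rewrite (lobj_at_crit b r) by lra.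
  apply lobj_gt_at_crit; lra.
Qed.

Lemma rho0_sq : rho0 ^ 2 = 1 + exp (W0 (2 / exp 1 ^ 2) + 2).
Proof. unfold rho0. apply pow2_sqrt. pose proof (exp_pos (W0 (2 / exp 1 ^ 2) + 2)). lra. Qed.

Lemma W0_rho0_spec : 0 < W0 (2 / exp 1 ^ 2) /\
  W0 (2 / exp 1 ^ 2) * exp (W0 (2 / exp 1 ^ 2) + 2) = 2.
Proof.
  pose proof (exp_pos 1).
  destruct (W0_spec (2 / exp 1 ^ 2)) as [Hpos Hfix];
    [apply Rdiv_lt_0_compat; [lra | apply pow_lt; lra] |].
  split; [exact Hpos |].
  assert (He2 : exp 2 = exp 1 ^ 2)
    by (replace 2 with (1 + 1) by ring; rewrite exp_plus; ring).
  rewrite exp_plus, He2, <- Rmult_assoc, Hfix. field. lra.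
Qed.

Lemma rho0_gt_sqrt2 : sqrt 2 < rho0.
Proof.
  destruct W0_rho0_spec as [Hpos _].
  pose proof (exp_ineq1_le (W0 (2 / exp 1 ^ 2) + 2)).
  unfold rho0. apply sqrt_lt_1; lra.
Qed.

Lemma crit_rho0 : crit rho0 = 0.
Proof.
  destruct W0_rho0_spec as [Hpos Hfix].
  pose proof rho0_gt_sqrt2. pose proof one_lt_sqrt2.
  apply Rmult_eq_reg_r with rho0; [| lra].
  rewrite crit_mul, rho0_sq by lra.
  replace (1 + exp (W0 (2 / exp 1 ^ 2) + 2) - 1) with (exp (W0 (2 / exp 1 ^ 2) + 2)) by ring.
  rewrite ln_exp. lra.
Qed.

Theorem lemmaG2 :
  unique_minimiser 0 rho0 /\
  exists rho : R -> R,
    rho 0 = rho0 /\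
    filterlim rho (at_right 0) (locally (rho 0)) /\
    (forall b, 0 < b ->
       is_derive rho b
         (rho b ^ 2 / ((rho b ^ 2 + 1) * ln (rho b ^ 2 - 1))) /\
       rho b ^ 2 / ((rho b ^ 2 + 1) * ln (rho b ^ 2 - 1))
         = rho b / (2 * rho b + b) * (1 - 2 / (rho b ^ 2 + 1)) /\
       0 < rho b ^ 2 / ((rho b ^ 2 + 1) * ln (rho b ^ 2 - 1))) /\
    (forall b, 0 <= b ->
       unique_minimiser b (rho b) /\
       lobj b (rho b) = (rho b ^ 2 - 1) / (exp 1 * rho b) /\
       (rho b ^ 2 - 1) / (exp 1 * rho b) < rho b / exp 1).
Proof.
  pose proof one_lt_sqrt2. pose proof rho0_gt_sqrt2. pose proof crit_rho0.
  split; [apply unique_minimiser_of_crit; lra |].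
  exists rho_opt. split; [rewrite <- crit_rho0; apply rho_opt_crit; lra |]. split.
  { apply (filterlim_filter_le_1 (F := locally 0)); [apply filter_le_within |].
    apply continuity_pt_filterlim, rho_opt_continuous. lra. }
  split; intros b Hb;
    pose proof (rho_opt_gt b ltac:(lra)) as Hgt;
    destruct (rho_opt_spec b ltac:(lra)) as [_ Hcrit].
  - split; [apply rho_opt_derive; lra |].
    split; [apply ode_rhs_eq | apply ode_rhs_pos]; assumption.
  - split; [apply unique_minimiser_of_crit; assumption |].
    split; [apply lobj_at_crit; lra |].
    set (r := rho_opt b) in *. pose proof (exp_pos 1).
    assert (Hgap : r / exp 1 - (r ^ 2 - 1) / (exp 1 * r) = / (exp 1 * r))
      by (field; lra).
    assert (0 < / (exp 1 * r)) by (apply Rinv_0_lt_compat; nra).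
    lra.
Qed.
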